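(* If $X$ is a crowded (Hausdorff) $\sigma$-space, then $dis(X)=dis^*(X)$.
   Context: All spaces are Hausdorff. A space is crowded if it has no isolated points. A network for $X$ is a family $\mathcal{N}$ of subsets of $X$ such that for every open $U\subseteq X$ and $x\in U$ there is $N\in\mathcal{N}$ with $x\in N\subseteq U$. A $\sigma$-space is a space having a $\sigma$-discrete network. $dis(X)$ is the least number of discrete subspaces needed to cover $X$, and $dis^*(X)$ is the least number of closed discrete subsets needed to cover $X$. *)

From Stdlib Require Import Classical.

Set Implicit Arguments.


Record TopSpace := {
  carrier :> Type;
  is_open : (carrier -> Prop) -> Prop;
  open_full : is_open (fun _ => True);
  open_inter : forall U V, is_open U -> is_open V -> is_open (fun x => U x /\ V x);
  open_union : forall F : (carrier -> Prop) -> Prop,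
      (forall U, F U -> is_open U) -> is_open (fun x => exists U, F U /\ U x)
}.

Section Defs.
Variable X : TopSpace.

Definition is_closed (A : X -> Prop) : Prop := is_open X (fun x => ~ A x).

Definition hausdorff : Prop :=
  forall x y : X, x <> y ->
    exists U V, is_open X U /\ is_open X V /\ U x /\ V y /\ (forall z, ~ (U z /\ V z)).

(* x is isolated in X iff {x} is open. *)
Definition crowded : Prop :=
  forall x : X, ~ is_open X (fun y => y = x).

Definition discrete_subspace (D : X -> Prop) : Prop :=
  forall x, D x -> exists U, is_open X U /\ U x /\ (forall y, U y -> D y -> y = x).

Definition closed_discrete (D : X -> Prop) : Prop :=
  is_closed D /\ discrete_subspace D.

Definition discrete_family (F : (X -> Prop) -> Prop) : Prop :=
  forall x : X, exists U, is_open X U /\ U x /\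
    forall A B, F A -> F B ->
      (exists a, U a /\ A a) -> (exists b, U b /\ B b) ->
      (forall z, A z <-> B z).

Definition is_network (N : (X -> Prop) -> Prop) : Prop :=
  forall U x, is_open X U -> U x ->
    exists A, N A /\ A x /\ (forall z, A z -> U z).

Definition sigma_space : Prop :=
  exists Nn : nat -> (X -> Prop) -> Prop,
    (forall n, discrete_family (Nn n)) /\
    is_network (fun A => exists n, Nn n A).

(* "X can be covered by |I| discrete subspaces", i.e. dis(X) <= |I|. *)
Definition dis_cover (I : Type) : Prop :=
  exists D : I -> X -> Prop,
    (forall i, discrete_subspace (D i)) /\ (forall x, exists i, D i x).

(* "X can be covered by |I| closed discrete subsets", i.e. dis*(X) <= |I|. *)
Definition dis_star_cover (I : Type) : Prop :=
  exists D : I -> X -> Prop,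
    (forall i, closed_discrete (D i)) /\ (forall x, exists i, D i x).

End Defs.

From Stdlib Require Import Classical ClassicalEpsilon FunctionalExtensionality
  PropExtensionality List PeanoNat Cantor Lia.
From mathcomp Require classical_sets.
Set Implicit Arguments.
Unset Strict Implicit.

(* A cover by closed discrete sets is a cover by discrete sets, so only
   dis(X) <= |I| -> dis*(X) <= |I| needs work.  Fix a sigma-discrete network
   N = U_n N_n and a discrete subspace D.  The points of D isolated in D by a
   member of N_n form a closed discrete set [isolated_by (N_n) D], because
   N_n is a discrete family; and since D is discrete and N a network, D is the
   union of these countably many sets.  Thus I-many discrete sets yield (I x nat)-many
   closed discrete sets covering X.  To reindex by I we show I is infinite:
   in a crowded T1 space no finite family of discrete subspaces covers a
   nonempty open set. *)

Definition infinite_type (I : Type) : Prop := forall l : list I, exists i, ~ In i l.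

Lemma injective_sequence (I : Type) (Q : I -> Prop) :
  (forall l : list I, exists i, Q i /\ ~ In i l) ->
  exists h : nat -> I, (forall m n, h m = h n -> m = n) /\ forall n, Q (h n).
Proof.
  intros HQ.
  destruct (choice _ HQ) as [pick Hpick].
  (* [prefix n] lists the first n chosen elements, newest first. *)
  set (prefix := fix prefix n := match n with 0 => nil | S n => pick (prefix n) :: prefix n end).
  exists (fun n => pick (prefix n)). split; [|intro n; apply Hpick].
  assert (earlier_in_prefix : forall m n, m < n -> In (pick (prefix m)) (prefix n)).
  { intros m n; induction n as [|n IH]; intros Hmn; [lia|].
    simpl. destruct (Nat.eq_dec m n) as [->|Hne]; [left; reflexivity|right; apply IH; lia]. }
  intros m n E. destruct (Nat.lt_trichotomy m n) as [Hlt|[Heq|Hgt]]; auto.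
  - exfalso. apply (proj2 (Hpick (prefix n))). rewrite <- E. apply earlier_in_prefix; auto.
  - exfalso. apply (proj2 (Hpick (prefix m))). rewrite E. apply earlier_in_prefix; auto.
Qed.

Section Absorption.
Variable I : Type.

Definition in_domain (M : I * (I * nat) -> Prop) (b : I) : Prop := exists p, M (b, p).

Definition self_cover (M : I * (I * nat) -> Prop) : Prop :=
  (forall i p q, M (i, p) -> M (i, q) -> p = q) /\
  (forall b n, in_domain M b -> exists i, M (i, (b, n))).

Lemma self_cover_chain_union (F : (I * (I * nat) -> Prop) -> Prop) :
  (forall M, F M -> self_cover M) ->
  classical_sets.total_on F classical_sets.subset ->
  self_cover (classical_sets.bigcup F (fun M => M)).
Proof.
  intros HF Hchain. split.
  - intros i p q [A FA Ap] [B FB Bq].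
    destruct (Hchain A B FA FB) as [AB|BA].
    + apply (proj1 (HF B FB) i); auto.
    + apply (proj1 (HF A FA) i); auto.
  - intros b n [p [A FA Ap]].
    destruct (proj2 (HF A FA) b n (ex_intro _ p Ap)) as [i Hi].
    exists i; exists A; auto.
Qed.

(* A self-cover whose domain misses an injective sequence h can be enlarged,
   by mapping h k onto (h (fst k'), snd k') where k' is the k-th Cantor pair. *)
Lemma self_cover_extend (M : I * (I * nat) -> Prop) (h : nat -> I) :
  self_cover M -> (forall m n, h m = h n -> m = n) -> (forall n, ~ in_domain M (h n)) ->
  exists M', self_cover M' /\ (forall t, M t -> M' t) /\ ~ (forall t, M' t -> M t).
Proof.
  intros [Mfun Mcover] hinj hout.
  set (step := fun k => (h k, (h (fst (of_nat k)), snd (of_nat k)))).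
  exists (fun t => M t \/ exists k, t = step k). split; [split|split].
  - intros i p q [Mp|[k Ek]] [Mq|[k' Ek']]; unfold step in *.
    + eauto.
    + injection Ek'; intros; subst. exfalso; apply (hout k'); exists p; auto.
    + injection Ek; intros; subst. exfalso; apply (hout k); exists q; auto.
    + injection Ek; injection Ek'; intros; subst.
      assert (k = k') by (apply hinj; congruence). subst; reflexivity.
  - intros b n [p [Mp|[k Ek]]].
    + destruct (Mcover b n (ex_intro _ p Mp)) as [i Hi]. exists i; left; exact Hi.
    + unfold step in Ek. injection Ek; intros; subst.
      exists (h (to_nat (k, n))). right. exists (to_nat (k, n)).
      unfold step. rewrite cancel_of_to. reflexivity.
  - intros t Mt; left; exact Mt.
  - intros Hsub. apply (hout 0). exists (snd (step 0)). apply Hsub. right; exists 0; reflexivity.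
Qed.

Lemma maximal_self_cover_cofinite (M : I * (I * nat) -> Prop) :
  self_cover M ->
  (forall M', classical_sets.proper M M' -> ~ self_cover M') ->
  exists L : list I, forall i, ~ in_domain M i -> In i L.
Proof.
  intros HM Hmax. apply NNPP; intro Hno.
  destruct (@injective_sequence _ (fun i => ~ in_domain M i)) as [h [hinj hout]].
  { intro l. apply NNPP; intro Hl. apply Hno. exists l. intros i Hi.
    apply NNPP; intro Hil. apply Hl. exists i; auto. }
  destruct (self_cover_extend HM hinj hout) as [M' [HM' [Msub Mnotsup]]].
  apply (Hmax M'); [split|]; auto.
Qed.

(* A self-cover with nonempty, cofinite domain yields a surjection onto I x nat:
   the missing finitely many first coordinates are encoded in the nat factor. *)
Lemma surjection_of_self_cover (M : I * (I * nat) -> Prop) (b0 : I) (L : list I) :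
  self_cover M -> in_domain M b0 -> (forall i, ~ in_domain M i -> In i L) ->
  exists g : I -> I * nat, forall p, exists i, g i = p.
Proof.
  intros [Mfun Mcover] Hb0 HL.
  (* [decode] maps (domain) x nat onto I x nat, using slot 0 for the domain itself. *)
  set (decode := fun p : I * nat =>
     let (b, n) := p in
     match of_nat n with
     | (0, j) => (b, j)
     | (S k, j) => match nth_error L k with Some l => (l, j) | None => (b, j) end
     end).
  assert (Hval : forall i, exists q, forall p, M (i, p) -> q = decode p).
  { intro i. destruct (classic (in_domain M i)) as [[p Mp]|Hnot].
    - exists (decode p). intros p' Mp'. rewrite (Mfun i p p'); auto.
    - exists (i, 0). intros p Mp. exfalso; apply Hnot; exists p; exact Mp. }
  destruct (choice _ Hval) as [g Hg]. exists g.
  intros [b n]. destruct (classic (in_domain M b)) as [Hb|Hb].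
  - destruct (Mcover b (to_nat (0, n)) Hb) as [i Hi]. exists i.
    rewrite (Hg _ _ Hi). unfold decode. rewrite cancel_of_to. reflexivity.
  - destruct (In_nth_error _ _ (HL b Hb)) as [k Hk].
    destruct (Mcover b0 (to_nat (S k, n)) Hb0) as [i Hi]. exists i.
    rewrite (Hg _ _ Hi). unfold decode. rewrite cancel_of_to, Hk. reflexivity.
Qed.

(* |I x nat| <= |I| for infinite I: take a maximal self-cover by Zorn. *)
Theorem infinite_absorbs_nat :
  infinite_type I -> exists g : I -> I * nat, forall p, exists i, g i = p.
Proof.
  intros Hinf.
  destruct (@classical_sets.Zorn_bigcup _ self_cover) as [M [HM Hmax]].
  { intros F HF Hchain. apply self_cover_chain_union; auto. }
  destruct (maximal_self_cover_cofinite HM Hmax) as [L HL].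
  destruct (Hinf L) as [b0 Hb0].
  assert (Hdom : in_domain M b0) by (apply NNPP; intro; apply Hb0; auto).
  exact (surjection_of_self_cover HM Hdom HL).
Qed.

End Absorption.

Section Topology.
Variable X : TopSpace.

Definition t1 : Prop := forall y : X, is_open X (fun z => z <> y).

Lemma open_ext (U V : X -> Prop) : is_open X U -> (forall x, U x <-> V x) -> is_open X V.
Proof.
  intros HU H. replace V with U; auto.
  apply functional_extensionality; intro x; apply propositional_extensionality; auto.
Qed.

Lemma open_of_local (V : X -> Prop) :
  (forall x, V x -> exists U, is_open X U /\ U x /\ forall z, U z -> V z) -> is_open X V.
Proof.
  intros H. apply open_ext with (fun x => exists U, (is_open X U /\ forall z, U z -> V z) /\ U x).
  - apply open_union. intros U [HU _]; exact HU.
  - intro x; split.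
    + intros [U [[_ HUV] Ux]]; auto.
    + intros Vx. destruct (H x Vx) as [U [HU [Ux HUV]]]. exists U; auto.
Qed.

Lemma hausdorff_t1 : hausdorff X -> t1.
Proof.
  intros Hh y. apply open_of_local. intros x Hxy.
  destruct (Hh x y Hxy) as [U [V [HU [HV [Ux [Vy Hdisj]]]]]].
  exists U; repeat split; auto. intros z Uz ->. apply (Hdisj y); auto.
Qed.

Lemma empty_closed_discrete : closed_discrete X (fun _ => False).
Proof.
  split.
  - apply open_ext with (fun _ => True); [apply open_full|tauto].
  - intros x [].
Qed.

(* In a crowded T1 space a discrete subspace is nowhere dense, so a nonempty
   open set is never covered by finitely many discrete subspaces. *)
Lemma open_avoids_finitely_many_discrete (I : Type) (D : I -> X -> Prop) :
  t1 -> crowded X -> (forall i, discrete_subspace X (D i)) ->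
  forall (l : list I) (U : X -> Prop), is_open X U -> (exists x, U x) ->
    exists x, U x /\ forall i, In i l -> ~ D i x.
Proof.
  intros Ht1 Hcrowd HD l. induction l as [|i0 l IH]; intros U HU [x0 Ux0].
  { exists x0; split; [exact Ux0|intros i []]. }
  destruct (classic (exists y, U y /\ D i0 y)) as [[y [Uy Dy]]|Hmiss].
  - (* Shrink U to an open W disjoint from D i0; W is nonempty as y is not isolated. *)
    destruct (HD i0 y Dy) as [V [HV [Vy HVD]]].
    set (W := fun z => (U z /\ V z) /\ z <> y).
    assert (HW : is_open X W) by (apply open_inter; [apply open_inter|apply Ht1]; auto).
    assert (Wne : exists x, W x).
    { apply NNPP; intro Wempty. apply (Hcrowd y).
      apply open_ext with (fun z => U z /\ V z); [apply open_inter; auto|].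
      intro z; split.
      - intros HUV. apply NNPP; intro Hz. apply Wempty. exists z; split; auto.
      - intros ->; auto. }
    destruct (IH W HW Wne) as [x [[[Ux Vx] Hxy] Hx]].
    exists x; split; [exact Ux|]. intros i [<-|Hi]; [|auto].
    intro Dx; apply Hxy; apply HVD; auto.
  - destruct (IH U HU (ex_intro _ x0 Ux0)) as [x [Ux Hx]].
    exists x; split; [exact Ux|]. intros i [<-|Hi]; [|auto].
    intro Dx; apply Hmiss; eauto.
Qed.

Lemma discrete_cover_infinite (I : Type) (D : I -> X -> Prop) :
  t1 -> crowded X -> (exists x : X, True) ->
  (forall i, discrete_subspace X (D i)) -> (forall x, exists i, D i x) ->
  infinite_type I.
Proof.
  intros Ht1 Hcrowd [x0 _] HD Hcov l.
  destruct (open_avoids_finitely_many_discrete Ht1 Hcrowd HD l (open_full X) (ex_intro _ x0 Logic.I))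
    as [x [_ Hx]].
  destruct (Hcov x) as [j Dj]. exists j. intro Hj. exact (Hx j Hj Dj).
Qed.

Definition isolated_by (N : (X -> Prop) -> Prop) (D : X -> Prop) (d : X) : Prop :=
  D d /\ exists A, N A /\ A d /\ forall y, A y -> D y -> y = d.

Lemma isolated_by_locally_unique (N : (X -> Prop) -> Prop) (D : X -> Prop) (x : X) :
  discrete_family X N ->
  exists U, is_open X U /\ U x /\
    forall d d', U d -> U d' -> isolated_by N D d -> isolated_by N D d' -> d = d'.
Proof.
  intros HN. destruct (HN x) as [U [HU [Ux Hone]]]. exists U; repeat split; auto.
  intros d d' Ud Ud' [Dd [A [NA [Ad HA]]]] [Dd' [A' [NA' [Ad' HA']]]].
  assert (HAA' := Hone A A' NA NA' (ex_intro _ d (conj Ud Ad)) (ex_intro _ d' (conj Ud' Ad'))).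
  symmetry. apply HA; auto. apply HAA'; exact Ad'.
Qed.

Lemma isolated_by_closed_discrete (N : (X -> Prop) -> Prop) (D : X -> Prop) :
  t1 -> discrete_family X N -> closed_discrete X (isolated_by N D).
Proof.
  intros Ht1 HN. split.
  - apply open_of_local. intros x Hx.
    destruct (isolated_by_locally_unique D x HN) as [U [HU [Ux Huniq]]].
    destruct (classic (exists d, U d /\ isolated_by N D d)) as [[d [Ud Hd]]|Hnone].
    + exists (fun z => U z /\ z <> d). split; [apply open_inter; auto|].
      split; [split; [exact Ux|intros ->; exact (Hx Hd)]|].
      intros z [Uz Hzd] Hz. apply Hzd, Huniq; auto.
    + exists U; split; [exact HU|split; [exact Ux|]].
      intros z Uz Hz; apply Hnone; eauto.
  - intros d Hd. destruct (isolated_by_locally_unique D d HN) as [U [HU [Ud Huniq]]].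
    exists U; split; [exact HU|split; [exact Ud|]].
    intros y Uy Hy. apply Huniq; auto.
Qed.

Lemma discrete_covered_by_layers (Nn : nat -> (X -> Prop) -> Prop) (D : X -> Prop) (x : X) :
  is_network X (fun A => exists n, Nn n A) -> discrete_subspace X D -> D x ->
  exists n, isolated_by (Nn n) D x.
Proof.
  intros Hnet HD Dx. destruct (HD x Dx) as [U [HU [Ux HUD]]].
  destruct (Hnet U x HU Ux) as [A [[n NA] [Ax AU]]].
  exists n. split; [exact Dx|]. exists A; repeat split; auto.
Qed.

End Topology.

(* dis(X) = dis*(X), stated cardinal-free: for every index type I,
   dis(X) <= |I|  <->  dis*(X) <= |I|. *)
Theorem mainTheorem4 (X : TopSpace) :
  hausdorff X -> crowded X -> sigma_space X ->
  forall I : Type, dis_cover X I <-> dis_star_cover X I.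
Proof.
  intros Hh Hcrowd [Nn [Hfam Hnet]] I.
  assert (Ht1 := hausdorff_t1 Hh).
  split.
  - intros [D [HD Hcov]].
    destruct (classic (exists x : X, True)) as [Hne|Hempty].
    2:{ exists (fun _ _ => False). split; [intros; apply empty_closed_discrete|].
        intro x; exfalso; apply Hempty; exists x; exact Logic.I. }
    destruct (infinite_absorbs_nat (discrete_cover_infinite Ht1 Hcrowd Hne HD Hcov))
      as [g Hg].
    exists (fun i => isolated_by (Nn (snd (g i))) (D (fst (g i)))). split.
    + intro i. apply isolated_by_closed_discrete; auto.
    + intro x. destruct (Hcov x) as [j Dj].
      destruct (discrete_covered_by_layers Hnet (HD j) Dj) as [n Hn].
      destruct (Hg (j, n)) as [i Ei]. exists i. rewrite Ei. exact Hn.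
  - intros [D [HD Hcov]]. exists D; split; [intro i; apply (HD i)|exact Hcov].
Qed.
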